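(* In the setting described in the context, the following two-sided estimates hold: $$|J(u)-J(u_h^{(2)})|-|\mathcal{R}^{(3)}-\mathcal{R}^{(3)(2)}|\le|\eta_h-\eta_h^{(2)}|\le|J(u)-J(u_h^{(2)})|+|\mathcal{R}^{(3)}-\mathcal{R}^{(3)(2)}|,$$ and $$|J(u)-J(\tilde u)|-|\rho(\tilde u)(\tilde z)|-|\mathcal{R}^{(3)}|\le|\eta_h|\le|J(u)-J(\tilde u)|+|\rho(\tilde u)(\tilde z)|+|\mathcal{R}^{(3)}|.$$
   Context: Let $U$ and $V$ be real Banach spaces with dual $V^*$. Let $\mathcal{A}:U\to V^*$ be a (nonlinear) operator that is three times continuously Fréchet differentiable, and let $J:U\to\mathbb{R}$ be three times continuously Fréchet differentiable. Notation: $\mathcal{A}(w)(v)$ is the value of $\mathcal{A}(w)\in V^*$ at $v\in V$. For fixed $v$, $\mathcal{A}'(w)(\varphi,v)$, $\mathcal{A}''(w)(\varphi,\psi,v)$ and $\mathcal{A}'''(w)(\varphi,\psi,\chi,v)$ denote the first, second and third Fréchet derivatives of $w\mapsto\mathcal{A}(w)(v)$ at $w$ in the directions $\varphi,\psi,\chi\in U$. Analogously, $J'(w)(\varphi)$ and $J'''(w)(\varphi,\psi,\chi)$ denote derivatives of $J$. Let $u\in U$ satisfy $\mathcal{A}(u)(v)=0$ for all $v\in V$, and let $z\in V$ satisfy $\mathcal{A}'(u)(\varphi,z)=J'(u)(\varphi)$ for all $\varphi\in U$. Let $U_h^{(2)}\subset U$ and $V_h^{(2)}\subset V$ be finite-dimensional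 subspaces. Let $u_h^{(2)}\in U_h^{(2)}$ satisfy $\mathcal{A}(u_h^{(2)})(v)=0$ for all $v\in V_h^{(2)}$. Let $z_h^{(2)}\in V_h^{(2)}$ satisfy $\mathcal{A}'(u_h^{(2)})(\varphi,z_h^{(2)})=J'(u_h^{(2)})(\varphi)$ for all $\varphi\in U_h^{(2)}$. Let $\tilde u\in U_h^{(2)}$ and $\tilde z\in V_h^{(2)}$ be arbitrary fixed elements. Define $\rho(\tilde u)(v):=-\mathcal{A}(\tilde u)(v)$ and $\rho^*(\tilde u,\tilde z)(\varphi):=J'(\tilde u)(\varphi)-\mathcal{A}'(\tilde u)(\varphi,\tilde z)$. With $e:=u-\tilde u$ and $e^*:=z-\tilde z$, define $$\mathcal{R}^{(3)}:=\frac12\int_0^1\Big[J'''(\tilde u+se)(e,e,e)-\mathcal{A}'''(\tilde u+se)(e,e,e,\tilde z+se^* )-3\mathcal{A}''(\tilde u+se)(e,e,e^* )\Big]s(s-1)\,ds.$$ Let $\mathcal{R}^{(3)(2)}$ be the same expression with $e,e^*,z$ replaced by $e^{(2)}:=u_h^{(2)}-\tilde u$, $e^{(2),*}:=z_h^{(2)}-\tilde z$, $z_h^{(2)}$. Define $$\eta_h:=\tfrac12\rho(\tilde u)(z-\tilde z)+\tfrac12\rho^*(\tilde u,\tilde z)(u-\tilde u),\qquad \eta_h^{(2)}:=\tfrac12\rho(\tilde u)(z_h^{(2)}-\tilde z)+\tfrac12\rho^*(\tilde u,\tilde z)(u_h^{(2)}-\tilde u).$$ *)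

From Stdlib Require Import Reals.
From Coquelicot Require Import Coquelicot.
Open Scope R_scope.

Definition subspace {E : ModuleSpace R_Ring} (S : E -> Prop) : Prop :=
  S zero /\ (forall x y, S x -> S y -> S (plus x y)) /\
  (forall (a : R) x, S x -> S (scal a x)).

Definition fin_dim_subspace {E : ModuleSpace R_Ring} (S : E -> Prop) : Prop :=
  subspace S /\
  exists (n : nat) (b : nat -> E),
    forall x, S x <-> exists c : nat -> R, x = sum_n (fun i => scal (c i) (b i)) n.

Definition rho {U V : NormedModule R_AbsRing} (A : U -> V -> R) (ut : U) (v : V) : R :=
  - A ut v.

Definition rho_star {U V : NormedModule R_AbsRing} (J1 : U -> U -> R)
  (A1 : U -> U -> V -> R) (ut : U) (zt : V) (phi : U) : R :=
  J1 ut phi - A1 ut phi zt.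

Definition eta {U V : NormedModule R_AbsRing} (A : U -> V -> R) (J1 : U -> U -> R)
  (A1 : U -> U -> V -> R) (ut : U) (zt : V) (u : U) (z : V) : R :=
  / 2 * rho A ut (minus z zt) + / 2 * rho_star J1 A1 ut zt (minus u ut).

Definition R3 {U V : NormedModule R_AbsRing} (J3 : U -> U -> U -> U -> R)
  (A2 : U -> U -> U -> V -> R) (A3 : U -> U -> U -> U -> V -> R)
  (ut : U) (zt : V) (u : U) (z : V) : R :=
  let e := minus u ut in
  let es := minus z zt in
  / 2 * RInt (fun s =>
      (J3 (plus ut (scal s e)) e e e
       - A3 (plus ut (scal s e)) e e e (plus zt (scal s es))
       - 3 * A2 (plus ut (scal s e)) e e es) * (s * (s - 1))) 0 1.

From Stdlib Require Import Reals Lra.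
From Coquelicot Require Import Coquelicot.
Open Scope R_scope.

(* Along the segment from (ut, zt) to (u, z), the Lagrangian L(x, y) = J(x) - A(x)(y) is a
   C^3 function f of the parameter s in [0, 1], and the trapezoidal rule with Peano remainder
     f(1) - f(0) = (f'(0) + f'(1)) / 2 + 1/2 \int_0^1 f'''(s) s (s - 1) ds
   reads J(u) - J(ut) = eta + rho(ut)(zt) + R^(3): the remainder term is exactly R^(3),
   f'(0) / 2 = eta, and f(1) = J(u), f'(1) = 0 because A(u)(.) vanishes on z and on z - zt
   and A'(u)(u - ut, z) = J'(u)(u - ut).  These facts hold for the exact pair (u, z), and
   for the discrete pair (uh2, zh2) because u - ut and z - zt then lie in the discrete
   spaces.  Given the two representations, both estimates are triangle inequalities. *)

Lemma plus_minus_cancel_l {G : AbelianGroup} (a b : G) : plus a (minus b a) = b.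
Proof.
  unfold minus. rewrite plus_comm, <- plus_assoc.
  etransitivity; [apply f_equal, plus_opp_l | apply plus_zero_r].
Qed.

Lemma subspace_minus {E : ModuleSpace R_Ring} (S : E -> Prop) (x y : E) :
  subspace S -> S x -> S y -> S (minus x y).
Proof.
  intros [_ [Hplus Hscal]] Hx Hy. apply Hplus; [exact Hx |].
  rewrite <- scal_opp_one. apply Hscal, Hy.
Qed.

Lemma is_derive_value_eq (f : R -> R) (x l l' : R) :
  is_derive f x l -> l = l' -> is_derive f x l'.
Proof. now intros H <-. Qed.

Lemma is_derive_Rplus (f g : R -> R) (x df dg : R) :
  is_derive f x df -> is_derive g x dg -> is_derive (fun t => f t + g t) x (df + dg).
Proof. exact (is_derive_plus f g x df dg). Qed.

Lemma is_derive_Rminus (f g : R -> R) (x df dg : R) :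
  is_derive f x df -> is_derive g x dg -> is_derive (fun t => f t - g t) x (df - dg).
Proof. exact (is_derive_minus f g x df dg). Qed.

Definition line {U : NormedModule R_AbsRing} (p d : U) (t : R) : U := plus p (scal t d).

Section Lines.

Context {U : NormedModule R_AbsRing}.

Lemma line_0 (p d : U) : line p d 0 = p.
Proof. exact (eq_trans (f_equal (plus p) (scal_zero_l d)) (plus_zero_r p)). Qed.

Lemma line_1 (p q : U) : line p (minus q p) 1 = q.
Proof. exact (eq_trans (f_equal (plus p) (scal_one _)) (plus_minus_cancel_l p q)). Qed.

Lemma linear_line (l : U -> R) (p d : U) (s : R) :
  is_linear l -> l (line p d s) = l p + s * l d.
Proof. intros Hl. unfold line. now rewrite (linear_plus _ Hl), (linear_scal _ Hl). Qed.

Lemma filterdiff_line (p d : U) (s : R) :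
  filterdiff (line p d) (locally s) (fun t => scal t d).
Proof.
  apply filterdiff_ext_lin with (fun t : R => plus zero (scal t d)).
  - apply (filterdiff_plus_fct (fun _ => p) (fun t : R => scal t d)).
    + exact (@filterdiff_const R_AbsRing R_NormedModule U _ _ p).
    + apply filterdiff_linear. exact (@is_linear_scal_l R_AbsRing U d).
  - intros t; apply plus_zero_l.
Qed.

Lemma continuous_line (p d : U) (s : R) : continuous (line p d) s.
Proof.
  apply (@filterdiff_continuous R_AbsRing R_NormedModule U).
  eexists; apply filterdiff_line.
Qed.

Lemma is_derive_along_line (F : U -> R) (DF : U -> U -> R) (p d : U) (s : R) :
  (forall x, filterdiff F (locally x) (DF x)) ->
  is_derive (fun t => F (line p d t)) s (DF (line p d s) d).
Proof.
  intros HF. unfold is_derive.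
  eapply filterdiff_ext_lin.
  - exact (filterdiff_comp' _ F s _ _ (filterdiff_line p d s) (HF _)).
  - intros t; simpl. destruct (HF (line p d s)) as [Hlin _].
    now rewrite (linear_scal _ Hlin).
Qed.

End Lines.

Section LinearAlongLine.

Context {V : NormedModule R_AbsRing}.
Variables (b : R -> V -> R) (p d : V).
Hypothesis b_linear : forall s, is_linear (b s).

Lemma is_derive_linear_along_line (db : R -> V -> R) (t : R) :
  is_linear (db t) -> (forall v, is_derive (fun s => b s v) t (db t v)) ->
  is_derive (fun s => b s (line p d s)) t (db t (line p d t) + b t d).
Proof.
  intros db_linear Hder.
  apply is_derive_ext with (fun s => b s p + s * b s d).
  { intros s; symmetry; apply linear_line, b_linear. }
  eapply is_derive_value_eq.
  - apply (is_derive_Rplus (fun s => b s p) (fun s => s * b s d)); [apply Hder |].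
    apply (Derive.is_derive_mult (fun s => s)); [| apply Hder].
    exact (is_derive_id t : is_derive _ t 1).
  - rewrite (linear_line _ _ _ _ db_linear). ring.
Qed.

Lemma continuous_linear_along_line (t : R) :
  (forall v, continuous (fun s => b s v) t) -> continuous (fun s => b s (line p d s)) t.
Proof.
  intros Hcont.
  apply continuous_ext with (fun s => b s p + s * b s d).
  { intros s; symmetry; apply linear_line, b_linear. }
  apply (continuous_plus (V := R_NormedModule) (fun s => b s p)); [apply Hcont |].
  apply (continuous_mult (K := R_AbsRing) (fun s => s)); [apply continuous_id | apply Hcont].
Qed.

End LinearAlongLine.

Lemma trapezoidal_rule_error (f f1 f2 f3 : R -> R) :
  (forall t, 0 <= t <= 1 -> is_derive f t (f1 t)) ->
  (forall t, 0 <= t <= 1 -> is_derive f1 t (f2 t)) ->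
  (forall t, 0 <= t <= 1 -> is_derive f2 t (f3 t)) ->
  (forall t, 0 <= t <= 1 -> continuous f3 t) ->
  f 1 - f 0 = / 2 * (f1 0 + f1 1) + / 2 * RInt (fun s => f3 s * (s * (s - 1))) 0 1.
Proof.
  intros Hf Hf1 Hf2 Hf3.
  (* An antiderivative of [f3 s * (s * (s - 1))], from integrating by parts twice. *)
  set (F t := f2 t * (t * (t - 1)) - f1 t * (2 * t - 1) + 2 * f t).
  assert (HF : forall t, 0 <= t <= 1 -> is_derive F t (f3 t * (t * (t - 1)))).
  { intros t Ht. eapply is_derive_value_eq.
    - apply (is_derive_Rplus (fun t => f2 t * (t * (t - 1)) - f1 t * (2 * t - 1))
                            (fun t => 2 * f t)).
      + apply (is_derive_Rminus (fun t => f2 t * (t * (t - 1))) (fun t => f1 t * (2 * t - 1))).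
        * apply Derive.is_derive_mult; [now apply Hf2 | auto_derive; auto].
        * apply Derive.is_derive_mult; [now apply Hf1 | auto_derive; auto].
      + apply is_derive_scal; now apply Hf.
    - cbv beta. ring. }
  assert (HI : is_RInt (fun s => f3 s * (s * (s - 1))) 0 1 (minus (F 1) (F 0))).
  { apply (is_RInt_derive (V := R_CompleteNormedModule) F).
    - rewrite Rmin_left, Rmax_right by lra. exact HF.
    - rewrite Rmin_left, Rmax_right by lra. intros t Ht.
      apply (continuous_mult (K := R_AbsRing) f3 (fun s => s * (s - 1))); [now apply Hf3 |].
      apply (ex_derive_continuous (K := R_AbsRing) (V := R_NormedModule)). auto_derive; auto. }
  rewrite (is_RInt_unique _ _ _ _ HI). unfold F, minus, plus, opp; simpl. field.
Qed.

Section LagrangianAlongSegment.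

Context {U V : NormedModule R_AbsRing}.
Variables (A : U -> V -> R) (A1 : U -> U -> V -> R) (A2 : U -> U -> U -> V -> R)
  (A3 : U -> U -> U -> U -> V -> R)
  (J : U -> R) (J1 : U -> U -> R) (J2 : U -> U -> U -> R) (J3 : U -> U -> U -> U -> R).
Hypotheses (HAlin : forall w, is_linear (A w))
  (HA1lin : forall w phi, is_linear (A1 w phi))
  (HA2lin : forall w phi psi, is_linear (A2 w phi psi))
  (HA3lin : forall w phi psi chi, is_linear (A3 w phi psi chi))
  (HA1 : forall w v, filterdiff (fun w' => A w' v) (locally w) (fun phi => A1 w phi v))
  (HA2 : forall w phi v,
      filterdiff (fun w' => A1 w' phi v) (locally w) (fun psi => A2 w phi psi v))
  (HA3 : forall w phi psi v,
      filterdiff (fun w' => A2 w' phi psi v) (locally w) (fun chi => A3 w phi psi chi v))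
  (HA3c : forall w phi psi chi v, continuous (fun w' => A3 w' phi psi chi v) w)
  (HJ1 : forall w, filterdiff J (locally w) (J1 w))
  (HJ2 : forall w phi, filterdiff (fun w' => J1 w' phi) (locally w) (J2 w phi))
  (HJ3 : forall w phi psi,
      filterdiff (fun w' => J2 w' phi psi) (locally w) (J3 w phi psi))
  (HJ3c : forall w phi psi chi, continuous (fun w' => J3 w' phi psi chi) w).
Variables (ut u : U) (zt z : V).

Let e := minus u ut.
Let es := minus z zt.

Lemma is_derive_form_along_segment (B : U -> V -> R) (DB : U -> U -> V -> R) (t : R) :
  (forall x, is_linear (B x)) -> is_linear (DB (line ut e t) e) ->
  (forall x v, filterdiff (fun x' => B x' v) (locally x) (fun phi => DB x phi v)) ->
  is_derive (fun s => B (line ut e s) (line zt es s)) t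
    (DB (line ut e t) e (line zt es t) + B (line ut e t) es).
Proof.
  intros B_linear DB_linear HB.
  apply (is_derive_linear_along_line (fun s => B (line ut e s)) zt es (fun s => B_linear _)
           (fun s => DB (line ut e s) e)); [exact DB_linear |].
  intros v; apply (is_derive_along_line (fun x => B x v) (fun x phi => DB x phi v)).
  intros x; apply HB.
Qed.

Let lag t := J (line ut e t) - A (line ut e t) (line zt es t).
Let lag1 t := J1 (line ut e t) e - (A1 (line ut e t) e (line zt es t) + A (line ut e t) es).
Let lag2 t := J2 (line ut e t) e e
  - (A2 (line ut e t) e e (line zt es t) + 2 * A1 (line ut e t) e es).
Let lag3 t := J3 (line ut e t) e e e
  - (A3 (line ut e t) e e e (line zt es t) + 3 * A2 (line ut e t) e e es).

Lemma is_derive_lag t : is_derive lag t (lag1 t).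
Proof.
  apply is_derive_Rminus.
  - apply is_derive_along_line, HJ1.
  - apply is_derive_form_along_segment; auto.
Qed.

Lemma is_derive_lag1 t : is_derive lag1 t (lag2 t).
Proof.
  eapply is_derive_value_eq.
  - apply is_derive_Rminus; [| apply is_derive_Rplus].
    + apply (is_derive_along_line (fun x => J1 x e) (fun x => J2 x e)).
      intros x; apply HJ2.
    + apply (is_derive_form_along_segment (fun x => A1 x e) (fun x => A2 x e)); auto.
    + apply (is_derive_along_line (fun x => A x es) (fun x phi => A1 x phi es)).
      intros x; apply HA1.
  - unfold lag2; ring.
Qed.

Lemma is_derive_lag2 t : is_derive lag2 t (lag3 t).
Proof.
  eapply is_derive_value_eq.
  - apply is_derive_Rminus; [| apply is_derive_Rplus].
    + apply (is_derive_along_line (fun x => J2 x e e) (fun x => J3 x e e)).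
      intros x; apply HJ3.
    + apply (is_derive_form_along_segment (fun x => A2 x e e) (fun x => A3 x e e)); auto.
    + apply is_derive_scal.
      apply (is_derive_along_line (fun x => A1 x e es) (fun x phi => A2 x e phi es)).
      intros x; apply HA2.
  - unfold lag3; ring.
Qed.

Lemma continuous_lag3 t : continuous lag3 t.
Proof.
  assert (Hline : continuous (line ut e) t) by apply continuous_line.
  apply (continuous_minus (V := R_NormedModule) (fun s => J3 (line ut e s) e e e)).
  { exact (continuous_comp _ (fun x => J3 x e e e) t Hline (HJ3c _ e e e)). }
  apply (continuous_plus (V := R_NormedModule) (fun s => A3 (line ut e s) e e e (line zt es s))).
  - apply (continuous_linear_along_line (fun s => A3 (line ut e s) e e e)).
    { intros; apply HA3lin. }
    intros v; exact (continuous_comp _ (fun x => A3 x e e e v) t Hline (HA3c _ e e e v)).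
  - apply (continuous_mult (K := R_AbsRing) (fun _ => 3)); [apply continuous_const |].
    apply (ex_derive_continuous (K := R_AbsRing) (V := R_NormedModule)); eexists.
    apply (is_derive_along_line (fun x => A2 x e e es) (fun x phi => A3 x e e phi es)).
    intros x; apply HA3.
Qed.

Lemma goal_error_representation :
  A u z = 0 -> A u (minus z zt) = 0 -> A1 u (minus u ut) z = J1 u (minus u ut) ->
  J u - J ut = eta A J1 A1 ut zt u z + rho A ut zt + R3 J3 A2 A3 ut zt u z.
Proof.
  intros Hstate Hstate_es Hadjoint.
  assert (Htrap := trapezoidal_rule_error lag lag1 lag2 lag3
                     (fun t _ => is_derive_lag t) (fun t _ => is_derive_lag1 t)
                     (fun t _ => is_derive_lag2 t) (fun t _ => continuous_lag3 t)).
  assert (HR3 : R3 J3 A2 A3 ut zt u z = / 2 * RInt (fun s => lag3 s * (s * (s - 1))) 0 1).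
  { unfold R3; cbv zeta. f_equal. apply RInt_ext. intros s _.
    unfold lag3, line, e, es. now rewrite Rminus_plus_distr. }
  unfold lag, lag1 in Htrap. rewrite !line_0 in Htrap.
  unfold e, es in Htrap. rewrite !line_1 in Htrap.
  unfold eta, rho, rho_star. lra.
Qed.

End LagrangianAlongSegment.

Theorem mainTheorem7
  (U V : CompleteNormedModule R_AbsRing)
  (* the operator A : U -> V*, written A w v = A(w)(v), and its derivatives *)
  (A : U -> V -> R) (A1 : U -> U -> V -> R) (A2 : U -> U -> U -> V -> R)
  (A3 : U -> U -> U -> U -> V -> R)
  (* the functional J and its derivatives *)
  (J : U -> R) (J1 : U -> U -> R) (J2 : U -> U -> U -> R) (J3 : U -> U -> U -> U -> R)
  (* A(w), A'(w)(phi,.), ... are elements of V* (bounded linear) *)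
  (HAlin : forall w, is_linear (A w))
  (HA1lin : forall w phi, is_linear (A1 w phi))
  (HA2lin : forall w phi psi, is_linear (A2 w phi psi))
  (HA3lin : forall w phi psi chi, is_linear (A3 w phi psi chi))
  (* A is three times continuously Frechet differentiable *)
  (HA1 : forall w v, filterdiff (fun w' => A w' v) (locally w) (fun phi => A1 w phi v))
  (HA2 : forall w phi v,
      filterdiff (fun w' => A1 w' phi v) (locally w) (fun psi => A2 w phi psi v))
  (HA3 : forall w phi psi v,
      filterdiff (fun w' => A2 w' phi psi v) (locally w) (fun chi => A3 w phi psi chi v))
  (HA3c : forall w phi psi chi v, continuous (fun w' => A3 w' phi psi chi v) w)
  (* J is three times continuously Frechet differentiable *)
  (HJ1 : forall w, filterdiff J (locally w) (J1 w))
  (HJ2 : forall w phi, filterdiff (fun w' => J1 w' phi) (locally w) (J2 w phi))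
  (HJ3 : forall w phi psi,
      filterdiff (fun w' => J2 w' phi psi) (locally w) (J3 w phi psi))
  (HJ3c : forall w phi psi chi, continuous (fun w' => J3 w' phi psi chi) w)
  (* primal and adjoint solutions *)
  (u : U) (z : V)
  (Hu : forall v, A u v = 0)
  (Hz : forall phi, A1 u phi z = J1 u phi)
  (* finite-dimensional discrete spaces and discrete solutions *)
  (Uh2 : U -> Prop) (Vh2 : V -> Prop)
  (HUh2 : fin_dim_subspace Uh2) (HVh2 : fin_dim_subspace Vh2)
  (uh2 : U) (zh2 : V)
  (Huh2mem : Uh2 uh2) (Huh2 : forall v, Vh2 v -> A uh2 v = 0)
  (Hzh2mem : Vh2 zh2) (Hzh2 : forall phi, Uh2 phi -> A1 uh2 phi zh2 = J1 uh2 phi)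
  (* arbitrary fixed discrete elements *)
  (ut : U) (zt : V) (Hut : Uh2 ut) (Hzt : Vh2 zt) :
  let etah := eta A J1 A1 ut zt u z in
  let etah2 := eta A J1 A1 ut zt uh2 zh2 in
  let R3e := R3 J3 A2 A3 ut zt u z in
  let R3e2 := R3 J3 A2 A3 ut zt uh2 zh2 in
  (Rabs (J u - J uh2) - Rabs (R3e - R3e2) <= Rabs (etah - etah2) /\
   Rabs (etah - etah2) <= Rabs (J u - J uh2) + Rabs (R3e - R3e2)) /\
  (Rabs (J u - J ut) - Rabs (rho A ut zt) - Rabs R3e <= Rabs etah /\
   Rabs etah <= Rabs (J u - J ut) + Rabs (rho A ut zt) + Rabs R3e).
Proof.
  intros etah etah2 R3e R3e2.
  destruct HUh2 as [HUsub _], HVh2 as [HVsub _].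
  assert (Herr : J u - J ut = etah + rho A ut zt + R3e).
  { apply (goal_error_representation A A1 A2 A3 J J1 J2 J3); auto. }
  assert (Herr2 : J uh2 - J ut = etah2 + rho A ut zt + R3e2).
  { apply (goal_error_representation A A1 A2 A3 J J1 J2 J3); auto.
    - apply Huh2; exact (subspace_minus Vh2 zh2 zt HVsub Hzh2mem Hzt).
    - apply Hzh2; exact (subspace_minus Uh2 uh2 ut HUsub Huh2mem Hut). }
  split; split; split_Rabs; lra.
Qed.
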